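(* The L\'evy measure $Q$ of a time-stable process is supported by the set $\{f\in\mathbb{R}^{[0,\infty)}\setminus\{0\}:\ f(0)=0\}$, i.e. $Q(\{f:\ f(0)\neq0\})=0$.
   Context: For a process $\eta$ on $[0,\infty)$ and $a>0$, $(a\circ\eta)(t)=\eta(at)$. A stochastically continuous real-valued process $\xi(t)$, $t\geq0$, is time-stable if for each integer $n\geq2$, $\xi_1+\cdots+\xi_n$ and $n\circ\xi$ have the same finite-dimensional distributions, where $\xi_1,\dots,\xi_n$ are i.i.d. copies of $\xi$. L\'evy measure: an infinitely divisible stochastically continuous process $\xi$ (its Gaussian part, if any, removed) admits a representation in which there is a deterministic function $c$ on $[0,\infty)$ and a $\sigma$-finite measure $Q$ on $\mathbb{R}^{[0,\infty)}\setminus\{0\}$ (cylindrical $\sigma$-algebra, completed with respect to $Q$) with $\int\min(1,f(t)^2)Q(df)<\infty$ for all $t\geq0$, such that for all $k\geq1$, $t_1,\dots,t_k\geq0$, $\theta_1,\dots,\theta_k\in\mathbb{R}$, $$\mathbb{E}e^{\mathrm{i}\sum_j\theta_j\xi(t_j)}=\exp\Big\{\mathrm{i}\sum_j\theta_jc(t_j)+\int\Big[e^{\mathrm{i}\sum_j\theta_jf(t_j)}-1-\mathrm{i}\sum_j\theta_jL(f(t_j))\Big]Q(df)\Big\},$$ where $L(u)=u$ for $|u|\le1$, $L(u)=1$ for $u>1$, $L(u)=-1$ for $u<-1$. (Equivalently $\xi(t)$ equals in law $c(t)$ plus the compensated sum of the values at $t$ of the points of a Poisson process on $\mathbb{R}^{[0,\infty)}\setminus\{0\}$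 with intensity $Q$.) The representation can be chosen minimal: the $\sigma$-algebra generated by the sets $\{f:f(t)\in A\}$, $t\ge0$, $A$ Borel, coincides with the cylindrical $\sigma$-algebra up to $Q$-null sets, and there is no measurable $B$ with $Q(B)>0$ such that $Q(\{f\in B: f(t)\neq0\})=0$ for every $t\geq0$. The minimal representation is unique up to isomorphism; its $Q$ is called the L\'evy measure of $\xi$. *)

From HB Require Import structures.
From mathcomp Require Import all_boot all_order all_algebra.
From mathcomp Require Import all_classical all_reals all_analysis.
Set Implicit Arguments. Unset Strict Implicit. Unset Printing Implicit Defensive.
Import Order.TTheory GRing.Theory Num.Theory.
Import numFieldNormedType.Exports.
Local Open Scope classical_set_scope.
Local Open Scope ring_scope.

Definition time (R : realType) := {x : R | 0 <= x}.

Definition time0 (R : realType) : time R := exist _ 0 (lexx (0 : R)).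

Definition tscale (R : realType) (n : nat) (t : time R) : time R :=
  exist _ (n%:R * sval t) (mulr_ge0 (ler0n R n) (svalP t)).

Definition npath (R : realType) := {f : time R -> R | f <> (fun _ => 0)}.

Lemma npath_ne0 (R : realType) : (fun _ : time R => (1 : R)) <> (fun _ => 0).
Proof. by move=> /(congr1 (fun g => g (time0 R)))/eqP; rewrite oner_eq0. Qed.

HB.instance Definition _ (R : realType) := gen_eqMixin (npath R).
HB.instance Definition _ (R : realType) := gen_choiceMixin (npath R).
HB.instance Definition _ (R : realType) :=
  isPointed.Build (npath R) (exist _ (fun=> 1) (@npath_ne0 R)).

Definition cyl (R : realType) : set (set (npath R)) :=
  [set S | exists (t : time R) (A : set R),
      measurable A /\ S = [set f : npath R | A (sval f t)]].

Definition pathSpace (R : realType) := g_sigma_algebraType (@cyl R).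

Definition Ltrunc (R : realType) (u : R) : R :=
  if `|u| <= 1 then u else if 1 < u then 1 else -1.

Section process_defs.
Context {R : realType}.

(* Equality of finite-dimensional distributions (on measurable rectangles,
   which form a pi-system generating the Borel sets of R^k). *)
Definition same_fdd {d} {O : measurableType d} (P : probability O R)
  (X : time R -> O -> R)
  {d'} {O' : measurableType d'} (P' : probability O' R) (Y : time R -> O' -> R) :=
  forall (k : nat) (ts : 'I_k -> time R) (A : 'I_k -> set R),
    (forall j, measurable (A j)) ->
    P [set w | forall j, A j (X (ts j) w)] = P' [set w | forall j, A j (Y (ts j) w)].

Definition is_process {d} {O : measurableType d} (X : time R -> O -> R) :=
  forall t, measurable_fun setT (X t).

Definition iid_copies {d} {O : measurableType d} (P : probability O R)
  (X : time R -> O -> R)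
  {d'} {O' : measurableType d'} (P' : probability O' R) (n : nat)
  (xs : 'I_n -> time R -> O' -> R) :=
  (forall i, is_process (xs i)) /\
  (forall i, same_fdd P' (xs i) P X) /\
  (forall (k : nat) (ts : 'I_k -> time R) (A : 'I_n -> 'I_k -> set R),
    (forall i j, measurable (A i j)) ->
    fine (P' [set w | forall i j, A i j (xs i (ts j) w)]) =
      \prod_(i < n) fine (P' [set w | forall j, A i j (xs i (ts j) w)])).

Definition time_stable {d} {O : measurableType d} (P : probability O R)
  (X : time R -> O -> R) :=
  forall n : nat, (2 <= n)%N ->
    exists (d' : measure_display) (O' : measurableType d')
           (P' : probability O' R) (xs : 'I_n -> time R -> O' -> R),
      iid_copies P X P' xs /\
      same_fdd P' (fun t w => \sum_(i < n) xs i t w) P (fun t => X (tscale n t)).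

Definition stoch_continuous {d} {O : measurableType d} (P : probability O R)
  (X : time R -> O -> R) :=
  forall (t : time R) (e eta : R), 0 < e -> 0 < eta ->
    exists2 delta : R, 0 < delta &
      forall s : time R, `|sval s - sval t| < delta ->
        (P [set w | (e < `|X s w - X t w|)%R] < eta%:E)%E.

(* (c, Sig, Q) is a Levy-Khintchine representation of X: c deterministic
   shift, Sig the covariance of the Gaussian part, Q the Levy measure on
   R^[0,oo) \ {0}; the characteristic functions are written out via their
   real and imaginary parts (cos / sin). *)
Definition levy_rep {d} {O : measurableType d} (P : probability O R)
  (X : time R -> O -> R) (c : time R -> R) (Sig : time R -> time R -> R)
  (Q : {measure set (pathSpace R) -> \bar R}) :=
  (forall s t, Sig s t = Sig t s) /\
  (forall (k : nat) (ts : 'I_k -> time R) (th : 'I_k -> R),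
     0 <= \sum_(j < k) \sum_(l < k) th j * th l * Sig (ts j) (ts l)) /\
  (forall t : time R,
     (\int[Q]_(f in [set: pathSpace R]) (Num.min 1 (sval f t ^+ 2))%:E < +oo)%E) /\
  (forall (k : nat) (ts : 'I_k -> time R) (th : 'I_k -> R),
    let S := fun w => \sum_(j < k) th j * X (ts j) w in
    let g := fun f : pathSpace R => \sum_(j < k) th j * sval f (ts j) in
    let h := fun f : pathSpace R => \sum_(j < k) th j * Ltrunc (sval f (ts j)) in
    let a := - (\sum_(j < k) \sum_(l < k) th j * th l * Sig (ts j) (ts l)) / 2
             + Rintegral Q setT (fun f => cos (g f) - 1) in
    let b := \sum_(j < k) th j * c (ts j)
             + Rintegral Q setT (fun f => sin (g f) - h f) in
    (\int[P]_w (cos (S w))%:E = (expR a * cos b)%:E)%E /\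
    (\int[P]_w (sin (S w))%:E = (expR a * sin b)%:E)%E).

Definition levy_minimal (Q : {measure set (pathSpace R) -> \bar R}) :=
  forall B : set (pathSpace R), measurable B ->
    (forall t : time R, Q (B `&` [set f | sval f t <> 0]) = 0%E) -> Q B = 0%E.

End process_defs.

From HB Require Import structures.
From mathcomp Require Import all_boot all_order all_algebra.
From mathcomp Require Import all_classical all_reals all_analysis.
From mathcomp Require Import measurable_realfun ring lra.
Import Order.TTheory GRing.Theory Num.Theory.
Import numFieldNormedType.Exports.
Local Open Scope classical_set_scope.
Local Open Scope ring_scope.

(* At time 0, time-stability says that xi(0) has the law of the sum of two
   independent copies of itself, so its characteristic function z satisfies
   z = z^2.  By the Levy-Khintchine formula z = exp(a) e^(ib) does not vanish,
   hence z = 1 and a = 0.  For theta = 1/(m+1), a is the sum of the two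
   nonpositive terms -theta^2 Sig(0,0)/2 and -int (1 - cos (theta f(0))) dQ,
   so cos (theta f(0)) = 1 Q-a.e. for every m, which forces f(0) = 0 Q-a.e. *)

Section trig.
Context {R : realType}.

Lemma normr_sin_le (z : R) : `|sin z| <= `|z|.
Proof.
suff sin_le (b : R) : 0 <= b -> `|sin b| <= b.
  have [z0|z0] := leP 0 z; first by rewrite (ger0_norm z0); exact: sin_le.
  by rewrite (ltr0_norm z0) -normrN -sinN; apply: sin_le; rewrite oppr_ge0 ltW.
move=> b0; have [c _] := @MVT_segment R sin cos 0 b b0
  (fun x _ => is_derive_sin x) (continuous_subspaceT (@continuous_sin R)).
rewrite sin0 !subr0 => ->.
by rewrite normrM (ger0_norm b0) ler_piMl // cos_max.
Qed.

Lemma one_sub_cos (y : R) : 1 - cos y = 2 * sin (y / 2) ^+ 2.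
Proof.
have {1}-> : y = (y / 2) *+ 2 by rewrite -mulr_natr divfK // pnatr_eq0.
by rewrite cos_mulr2n cos2sin2; ring.
Qed.

Lemma one_sub_cos_le (y : R) : 1 - cos y <= y ^+ 2 / 2.
Proof.
have sin_sqr : sin (y / 2) ^+ 2 <= (y / 2) ^+ 2.
  by rewrite -[leLHS]real_normK ?num_real // -[leRHS]real_normK ?num_real //
    lerXn2r ?nnegrE // normr_sin_le.
by rewrite one_sub_cos; lra.
Qed.

Lemma one_sub_cos_le_min (th y : R) :
  1 - cos (th * y) <= (2 + th ^+ 2) * Num.min 1 (y ^+ 2).
Proof.
have cos_ge := cos_geN1 (th * y); have th2 := sqr_ge0 th; have y2 := sqr_ge0 y.
have [y21|y21] := leP 1 (y ^+ 2); rewrite ?(min_l y21) ?(min_r (ltW y21)); first lra.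
have := one_sub_cos_le (th * y); rewrite exprMn => h.
have : th ^+ 2 * y ^+ 2 <= th ^+ 2 by rewrite ler_piMr // ltW.
nra.
Qed.

Lemma cos_lt1 (y : R) : y != 0 -> `|y| < 4 -> cos y < 1.
Proof.
move=> y0 y4; rewrite -cos_norm -subr_gt0 one_sub_cos.
apply/mulr_gt0/exprn_gt0/sin2_gt0 => //.
by rewrite divr_gt0 ?normr_gt0 //= ltr_pdivrMr //; lra.
Qed.

Lemma measurable_cos_mul (th : R) : measurable_fun setT (fun x : R => cos (th * x)).
Proof.
apply: measurableT_comp; last exact: measurable_funM.
by apply: continuous_measurable_fun; exact: continuous_cos.
Qed.

Lemma measurable_sin_mul (th : R) : measurable_fun setT (fun x : R => sin (th * x)).
Proof.
apply: measurableT_comp; last exact: measurable_funM.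
by apply: continuous_measurable_fun; exact: continuous_sin.
Qed.

End trig.

Section Rintegral_nonneg.
Context {R : realType} {d} {T : measurableType d} (mu : {measure set T -> \bar R}).

Lemma Rintegral_ge0N (f : T -> R) : (forall x, 0 <= f x) ->
  \int[mu]_x (- f x) = - \int[mu]_x f x.
Proof.
move=> f0; rewrite /Rintegral -fineN -integral_ge0N => [|x _]; last by rewrite lee_fin.
by congr fine; apply: eq_integral => x _; rewrite EFinN.
Qed.

Lemma Rintegral_eq0_negligible (f : T -> R) :
  mu.-integrable setT (EFin \o f) -> (forall x, 0 <= f x) ->
  \int[mu]_x f x = 0 -> mu.-negligible [set x | f x != 0].
Proof.
move=> intf f0 int0.
have : (\int[mu]_x `|(f x)%:E| = 0)%E.
  under eq_integral do rewrite gee0_abs ?lee_fin //.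
  rewrite -[LHS]fineK; first by move: int0; rewrite /Rintegral => ->.
  exact: integrable_fin_num.
move/(ae_eq_integral_abs mu measurableT (measurable_int _ intf)) => [N [mN N0 sub]].
by exists N; split => // x /= fx0; apply: sub => /(_ I) [] /eqP; exact/negP.
Qed.

End Rintegral_nonneg.

Section one_sub_cos_integral.
Context {R : realType} {d} {T : measurableType d} (mu : {measure set T -> \bar R}).
Variable e : T -> R.
Hypotheses (me : measurable_fun setT e)
  (e_fin : (\int[mu]_x (Num.min 1 (e x ^+ 2))%:E < +oo)%E).

Let mcos_e (th : R) : measurable_fun setT (fun x => cos (th * e x)).
Proof. exact: measurableT_comp (measurable_cos_mul th) me. Qed.

(* Needed because [\int[mu]_x f x] is the [fine] of the integral, hence 0 when
   the integral diverges. *)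
Lemma integrable_one_sub_cos (th : R) :
  mu.-integrable setT (EFin \o (fun x => 1 - cos (th * e x))).
Proof.
apply/integrableP; split; first exact/measurable_EFinP/measurable_funB.
have mmin : measurable_fun setT (fun x => Num.min 1 (e x ^+ 2)).
  exact: measurable_minr (measurable_funX _ me).
apply: (@le_lt_trans _ _ (\int[mu]_x ((2 + th ^+ 2)%:E * (Num.min 1 (e x ^+ 2))%:E))%E).
  apply: ge0_le_integral => //.
  - by apply: measurableT_comp => //; exact/measurable_EFinP/measurable_funB.
  - exact/measurable_funeM/measurable_EFinP.
  by move=> x _; rewrite -EFinM lee_fin ger0_norm ?one_sub_cos_le_min.
rewrite ge0_integralZl_EFin ?addr_ge0 ?sqr_ge0 //.
- by rewrite lte_mul_pinfty // lee_fin addr_ge0 ?sqr_ge0.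
- by move=> x _; rewrite lee_fin le_min ler01 sqr_ge0.
- exact/measurable_EFinP.
Qed.

Lemma measure_neq0_eq0 :
  (forall m : nat, \int[mu]_x (1 - cos (m.+1%:R^-1 * e x)) = 0) ->
  mu [set x | e x <> 0] = 0%E.
Proof.
move=> int0.
have mE : measurable [set x | e x <> 0].
  by have := me measurableT _ (measurableC (measurable_set1 0)); rewrite setTI.
apply/(negligibleP _ mE).
pose N m := [set x | 1 - cos (m.+1%:R^-1 * e x) != 0].
apply: (@negligibleS _ _ _ mu (\bigcup_m N m)).
  move=> x /eqP ex0; exists (Num.truncn `|e x|) => //.
  rewrite /N /= subr_eq0 eq_sym lt_eqF // cos_lt1 //.
    by rewrite mulf_neq0 ?invr_eq0 ?pnatr_eq0.
  rewrite normrM ger0_norm ?invr_ge0 // mulrC ltr_pdivrMr //.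
  by have := truncnS_gt `|e x|; have := ler0n R (Num.truncn `|e x|).+1; lra.
apply: negligible_bigcup => m.
apply: Rintegral_eq0_negligible (integrable_one_sub_cos _) _ (int0 m) => x.
by rewrite subr_ge0 cos_le1.
Qed.

End one_sub_cos_integral.

Definition same_law {R : realType} {d1} {O1 : measurableType d1}
    (P1 : probability O1 R) (X1 : O1 -> R)
    {d2} {O2 : measurableType d2} (P2 : probability O2 R) (X2 : O2 -> R) :=
  forall A : set R, measurable A -> P1 (X1 @^-1` A) = P2 (X2 @^-1` A).

Definition indep2 {R : realType} {d} {O : measurableType d}
    (P : probability O R) (X1 X2 : O -> R) :=
  forall A B : set R, measurable A -> measurable B ->
    P (X1 @^-1` A `&` X2 @^-1` B) = (P (X1 @^-1` A) * P (X2 @^-1` B))%E.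

Section bounded_Rintegral.
Context {R : realType} {d} {O : measurableType d} (P : probability O R).

Lemma integrable_bounded (f : O -> R) (M : R) : measurable_fun setT f ->
  (forall w, `|f w| <= M) -> P.-integrable setT (EFin \o f).
Proof.
move=> mf fM; apply: measurable_bounded_integrable => //.
  exact: le_lt_trans (probability_le1 P measurableT) (ltry _).
exists M; split; first exact: ger0_real (le_trans (normr_ge0 _) (fM point)).
by move=> M' MM' w _; exact: le_trans (fM w) (ltW MM').
Qed.

Lemma Rintegral_distribution {d'} {T' : measurableType d'} (X : {mfun O >-> T'})
    (f : T' -> R) (M : R) : measurable_fun setT f -> (forall y, `|f y| <= M) ->
  \int[distribution P X]_y f y = \int[P]_w f (X w).
Proof.
move=> mf fM; rewrite /Rintegral integral_distribution //; first exact/measurable_EFinP.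
apply: (integrable_bounded _ _ _ (fun w => fM (X w))).
exact: measurableT_comp.
Qed.

Lemma EFin_Rintegral_bounded (f : O -> R) (M : R) : measurable_fun setT f ->
  (forall w, `|f w| <= M) -> (\int[P]_w f w)%:E = (\int[P]_w (f w)%:E)%E.
Proof.
move=> mf fM; rewrite fineK //.
exact/integrable_fin_num/(integrable_bounded _ _ mf fM).
Qed.

End bounded_Rintegral.

Lemma same_law_Rintegral {R : realType} {d1} {O1 : measurableType d1}
    (P1 : probability O1 R) (X1 : O1 -> R)
    {d2} {O2 : measurableType d2} (P2 : probability O2 R) (X2 : O2 -> R)
    (f : R -> R) (M : R) :
  measurable_fun setT X1 -> measurable_fun setT X2 -> same_law P1 X1 P2 X2 ->
  measurable_fun setT f -> (forall x, `|f x| <= M) ->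
  \int[P1]_w f (X1 w) = \int[P2]_w f (X2 w).
Proof.
move=> mX1 mX2 law mf fM.
pose X1' : {mfun O1 >-> R} := mfun_Sub (mem_set mX1).
pose X2' : {mfun O2 >-> R} := mfun_Sub (mem_set mX2).
rewrite -(Rintegral_distribution P1 X1' _ _ mf fM).
rewrite -(Rintegral_distribution P2 X2' _ _ mf fM).
by rewrite /Rintegral; congr fine; apply: eq_measure_integral => A mA _; exact: law.
Qed.

Section independent_product.
Context {R : realType} {d} {O : measurableType d} {P : probability O R}
  {X1 X2 : O -> R}.
Hypotheses (mX1 : measurable_fun setT X1) (mX2 : measurable_fun setT X2)
  (X12 : indep2 P X1 X2).

Let X1' : {mfun O >-> R} := mfun_Sub (mem_set mX1).
Let X2' : {mfun O >-> R} := mfun_Sub (mem_set mX2).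
Let Z : {mfun O >-> (R * R)%type} :=
  mfun_Sub (mem_set (measurable_fun_pair mX1 mX2)).
Let mu1 := distribution P X1'.
Let mu2 := distribution P X2'.

Let distribution_pair A : measurable A -> (mu1 \x mu2)%E A = distribution P Z A.
Proof.
apply: product_measure_unique => A1 A2 mA1 mA2.
by rewrite /mu1 /mu2 /distribution /pushforward /= -X12.
Qed.

Lemma indep_Rintegral_mul (f g : R -> R) (M N : R) :
  measurable_fun setT f -> (forall x, `|f x| <= M) ->
  measurable_fun setT g -> (forall y, `|g y| <= N) ->
  \int[P]_w (f (X1 w) * g (X2 w)) = \int[P]_w f (X1 w) * \int[P]_w g (X2 w).
Proof.
move=> mf fM mg gN.
pose h (z : R * R) := f z.1 * g z.2.
have mh : measurable_fun setT h by apply: measurable_funM; exact: measurableT_comp.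
have hMN z : `|h z| <= M * N.
  by rewrite normrM ler_pM // (le_trans (normr_ge0 _) (fM 0), fM, gN).
have -> : \int[P]_w (f (X1 w) * g (X2 w)) = \int[(mu1 \x mu2)%E]_z h z.
  rewrite -(Rintegral_distribution P Z _ _ mh hMN) /Rintegral; congr fine.
  by apply: eq_measure_integral => A mA _; exact/esym/distribution_pair.
have inner x : fubini_F mu2 (EFin \o h) x = (f x * \int[mu2]_y g y)%:E.
  rewrite /fubini_F -RintegralZl //; last exact: integrable_bounded _ _ _ mg gN.
  rewrite fineK //; apply: integrable_fin_num => //.
  apply: (integrable_bounded _ (fun y => f x * g y) (`|f x| * N)).
    exact: measurable_funM.
  by move=> y; rewrite normrM ler_wpM2l.
have -> : \int[(mu1 \x mu2)%E]_z h z = \int[mu1]_x (f x * \int[mu2]_y g y).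
  rewrite /Rintegral -(integral12_prod_meas1 (integrable_bounded _ _ _ mh hMN)).
  by congr fine; apply: eq_integral => x _; exact: inner.
rewrite RintegralZr //; last exact: integrable_bounded _ _ _ mf fM.
by rewrite (Rintegral_distribution P X1' _ _ mf fM)
  (Rintegral_distribution P X2' _ _ mg gN).
Qed.

End independent_product.

Definition char_re {R : realType} {d} {O : measurableType d}
  (P : probability O R) (X : O -> R) (th : R) := \int[P]_w cos (th * X w).

Definition char_im {R : realType} {d} {O : measurableType d}
  (P : probability O R) (X : O -> R) (th : R) := \int[P]_w sin (th * X w).

Section characteristic_function.
Context {R : realType}.

Lemma same_law_char {d1} {O1 : measurableType d1} {P1 : probability O1 R}
    {X1 : O1 -> R} {d2} {O2 : measurableType d2} {P2 : probability O2 R}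
    {X2 : O2 -> R} (th : R) :
  measurable_fun setT X1 -> measurable_fun setT X2 -> same_law P1 X1 P2 X2 ->
  char_re P1 X1 th = char_re P2 X2 th /\ char_im P1 X1 th = char_im P2 X2 th.
Proof.
move=> mX1 mX2 law; split.
- exact: same_law_Rintegral mX1 mX2 law (measurable_cos_mul th) (fun x => cos_max _).
- exact: same_law_Rintegral mX1 mX2 law (measurable_sin_mul th) (fun x => sin_max _).
Qed.

Section independent_sum.
Context {d} {O : measurableType d} (P : probability O R) (X1 X2 : O -> R).
Hypotheses (mX1 : measurable_fun setT X1) (mX2 : measurable_fun setT X2)
  (X12 : indep2 P X1 X2).

Let indep_trig (u v : R -> R) (th : R) :
  measurable_fun setT (fun x => u (th * x)) -> (forall x, `|u x| <= 1) ->
  measurable_fun setT (fun x => v (th * x)) -> (forall x, `|v x| <= 1) ->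
  \int[P]_w (u (th * X1 w) * v (th * X2 w)) =
    \int[P]_w u (th * X1 w) * \int[P]_w v (th * X2 w).
Proof.
move=> mu u1 mv v1.
exact: indep_Rintegral_mul mX1 mX2 X12 _ _ 1 1 mu (fun x => u1 _) mv (fun x => v1 _).
Qed.

Let integrable_trig (u v : R -> R) (th : R) :
  measurable_fun setT (fun x => u (th * x)) -> (forall x, `|u x| <= 1) ->
  measurable_fun setT (fun x => v (th * x)) -> (forall x, `|v x| <= 1) ->
  P.-integrable setT (EFin \o (fun w => u (th * X1 w) * v (th * X2 w))).
Proof.
move=> mu u1 mv v1; apply: (integrable_bounded _ _ 1) => [|w].
  exact: measurable_funM (measurableT_comp mu mX1) (measurableT_comp mv mX2).
by rewrite normrM mulr_ile1.
Qed.

Lemma char_re_add (th : R) :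
  char_re P (fun w => X1 w + X2 w) th =
  char_re P X1 th * char_re P X2 th - char_im P X1 th * char_im P X2 th.
Proof.
have mc := measurable_cos_mul th; have ms := measurable_sin_mul th.
have cb := @cos_max R; have sb := @sin_max R.
rewrite /char_re /char_im -(indep_trig cos cos) // -(indep_trig sin sin) //.
rewrite -RintegralB //; try by apply: integrable_trig.
by apply: eq_Rintegral => w _; rewrite mulrDr cosD.
Qed.

Lemma char_im_add (th : R) :
  char_im P (fun w => X1 w + X2 w) th =
  char_im P X1 th * char_re P X2 th + char_re P X1 th * char_im P X2 th.
Proof.
have mc := measurable_cos_mul th; have ms := measurable_sin_mul th.
have cb := @cos_max R; have sb := @sin_max R.
rewrite /char_re /char_im -(indep_trig sin cos) // -(indep_trig cos sin) //.
rewrite -RintegralD //; try by apply: integrable_trig.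
by apply: eq_Rintegral => w _; rewrite mulrDr sinD.
Qed.

End independent_sum.
End characteristic_function.

Lemma char_idempotent {R : realType} {d} {O : measurableType d}
    {P : probability O R} {Y : O -> R}
    {d'} {O' : measurableType d'} {P' : probability O' R} {X1 X2 : O' -> R} (th : R) :
  measurable_fun setT Y -> measurable_fun setT X1 -> measurable_fun setT X2 ->
  indep2 P' X1 X2 -> same_law P' X1 P Y -> same_law P' X2 P Y ->
  same_law P' (fun w => X1 w + X2 w) P Y ->
  let C := char_re P Y th in let S := char_im P Y th in
  C = C * C - S * S /\ S = S * C + C * S.
Proof.
move=> mY mX1 mX2 X12 law1 law2 law12 /=.
have [e12c e12s] := same_law_char th (measurable_funD mX1 mX2) mY law12.
have [e1c e1s] := same_law_char th mX1 mY law1.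
have [e2c e2s] := same_law_char th mX2 mY law2.
split; [rewrite -{1}e12c char_re_add | rewrite -{1}e12s char_im_add] => //;
  by rewrite e1c e1s e2c e2s.
Qed.

(* z = C + iS satisfies z = z^2 and |z| = expR A > 0, hence z = 1. *)
Lemma exponent_eq0_of_idempotent {R : realType} {C S A B : R} :
  C = C * C - S * S -> S = S * C + C * S ->
  C = expR A * cos B -> S = expR A * sin B -> A = 0.
Proof.
move=> eC eS hC hS.
have norm2 : C ^+ 2 + S ^+ 2 = expR A ^+ 2.
  by rewrite hC hS !exprMn -mulrDr cos2Dsin2 mulr1.
have S0 : S = 0.
  apply/eqP/negPn/negP => S_neq0.
  have C_half : C = 1 / 2.
    by apply: (mulfI S_neq0); rewrite [C * S]mulrC in eS; lra.
  by move: eC; rewrite C_half; have := sqr_ge0 S; rewrite expr2; lra.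
have C1 : C = 1.
  have C_neq0 : C != 0.
    apply: contra_eqN norm2 => /eqP C0.
    by rewrite C0 S0 expr0n addr0 eq_sym sqrf_eq0 expR_eq0.
  by apply: (mulfI C_neq0); rewrite S0 in eC; lra.
have : expR A ^+ 2 = 1 ^+ 2 by rewrite -norm2 C1 S0; lra.
move/eqP; rewrite eqrXn2 ?ler01 ?(ltW (expR_gt0 A)) // -expR0 => /eqP.
exact: expR_inj.
Qed.

Lemma set_forall_ord1 {T : Type} (p : T -> Prop) :
  [set w | 'I_1 -> p w] = [set w | p w].
Proof. by apply/seteqP; split => w /=; [move/(_ ord0)|move=> ? _]. Qed.

Lemma ord2_cases (i : 'I_2) : i = ord0 \/ i = ord_max.
Proof. by case: i => [[|[|//]] Hi]; [left|right]; apply: val_inj. Qed.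

Section time_stable.
Context {R : realType} {d} {O : measurableType d} {P : probability O R}
  {X : time R -> O -> R}.

Lemma same_fdd_law {d'} {O' : measurableType d'} {P' : probability O' R}
    {Y : time R -> O' -> R} (t : time R) :
  same_fdd P X P' Y -> same_law P (X t) P' (Y t).
Proof.
move=> XY A mA; have := XY 1%N (fun=> t) (fun=> A) (fun=> mA).
by rewrite !(set_forall_ord1 (fun w => A (_ t w))).
Qed.

Lemma iid_copies_indep2 {d'} {O' : measurableType d'} {P' : probability O' R}
    {xs : 'I_2 -> time R -> O' -> R} (t : time R) :
  iid_copies P X P' xs -> indep2 P' (xs ord0 t) (xs ord_max t).
Proof.
move=> [mxs [_ xs_prod]] A B mA mB.
pose AB (i : 'I_2) := if i == ord0 then A else B.
have mAB i : measurable (AB i) by rewrite /AB; case: ifP.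
have := xs_prod 1%N (fun=> t) (fun i _ => AB i) (fun i _ => mAB i).
rewrite big_ord_recl big_ord1 (_ : lift ord0 ord0 = ord_max); last exact: val_inj.
rewrite !(set_forall_ord1 (fun w => AB _ (xs _ t w))).
have -> : [set w | forall (i : 'I_2), 'I_1 -> AB i (xs i t w)] =
    xs ord0 t @^-1` A `&` xs ord_max t @^-1` B.
  apply/seteqP; split => w /=.
    by move=> h; split; [exact: (h ord0 ord0) | exact: (h ord_max ord0)].
  by move=> [hA hB] i _; case: (ord2_cases i) => ->.
have mpre i C : measurable C -> measurable (xs i t @^-1` C).
  by move=> mC; rewrite -[X in measurable X]setTI; exact: mxs.
have fin C : measurable C -> P' C = (fine (P' C))%:E.
  move=> mC; rewrite fineK // ge0_fin_numE ?measure_ge0 //.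
  exact: le_lt_trans (probability_le1 P' mC) (ltry _).
move=> h; rewrite fin; last exact: measurableI (mpre _ _ mA) (mpre _ _ mB).
by rewrite [X in X%:E = _]h EFinM -!fin //; apply: mpre; rewrite /AB.
Qed.

End time_stable.

Lemma tscale_time0 {R : realType} (n : nat) : tscale n (time0 R) = time0 R.
Proof. by apply: eq_exist; rewrite /= mulr0. Qed.

Lemma measurable_path_eval {R : realType} (t : time R) :
  measurable_fun setT (fun f : pathSpace R => sval f t).
Proof. by move=> _ A mA; rewrite setTI; apply: sub_sigma_algebra; exists t, A. Qed.

Lemma levy_rep_char {R : realType} {d} {O : measurableType d}
    {P : probability O R} {X : time R -> O -> R} {c : time R -> R}
    {Sig : time R -> time R -> R} {Q : {measure set (pathSpace R) -> \bar R}}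
    (t : time R) (th : R) :
  is_process X -> levy_rep P X c Sig Q ->
  let a := - (th * th * Sig t t) / 2 - \int[Q]_f (1 - cos (th * sval f t)) in
  exists b, char_re P (X t) th = expR a * cos b /\ char_im P (X t) th = expR a * sin b.
Proof.
move=> mX [_ [_ [_ rep]]] a.
have [hc hs] := rep 1%N (fun=> t) (fun=> th).
have cosE : (\int[P]_w (cos (\sum_(j < 1) th * X t w))%:E = (char_re P (X t) th)%:E)%E.
  have mcos := measurableT_comp (measurable_cos_mul th) (mX t).
  rewrite /char_re (EFin_Rintegral_bounded _ _ 1 mcos (fun w => cos_max _)).
  by apply: eq_integral => w _; rewrite big_ord1.
have sinE : (\int[P]_w (sin (\sum_(j < 1) th * X t w))%:E = (char_im P (X t) th)%:E)%E.
  have msin := measurableT_comp (measurable_sin_mul th) (mX t).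
  rewrite /char_im (EFin_Rintegral_bounded _ _ 1 msin (fun w => sin_max _)).
  by apply: eq_integral => w _; rewrite big_ord1.
have cosQ : \int[Q]_f (cos (\sum_(j < 1) th * sval f t) - 1) =
    - \int[Q]_f (1 - cos (th * sval f t)).
  rewrite -Rintegral_ge0N => [|f]; last by rewrite subr_ge0 cos_le1.
  by apply: eq_Rintegral => f _; rewrite big_ord1 opprB.
move: hc hs => /=; rewrite cosE sinE cosQ !big_ord1 => re_eq im_eq.
by eexists; split; apply: EFin_inj; [exact: re_eq | exact: im_eq].
Qed.

Lemma time_stable_char_time0 {R : realType} {d} {O : measurableType d}
    {P : probability O R} {X : time R -> O -> R} (th : R) :
  is_process X -> time_stable P X ->
  let C := char_re P (X (time0 R)) th in let S := char_im P (X (time0 R)) th in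
  C = C * C - S * S /\ S = S * C + C * S.
Proof.
move=> mX /(_ 2%N isT) [d2 [Om [Pm [xs [xs_iid sum_fdd]]]]].
have [mxs [xs_law _]] := xs_iid.
set t0 := time0 R.
apply: (char_idempotent th (mX t0) (mxs ord0 t0) (mxs ord_max t0)
  (iid_copies_indep2 t0 xs_iid)).
- exact: same_fdd_law t0 (xs_law ord0).
- exact: same_fdd_law t0 (xs_law ord_max).
have sum2 : (fun w => \sum_(i < 2) xs i t0 w) =
    (fun w => xs ord0 t0 w + xs ord_max t0 w).
  apply/funext => w.
  by rewrite big_ord_recl big_ord1 (_ : lift ord0 ord0 = ord_max) //; exact: val_inj.
by have := same_fdd_law t0 sum_fdd; rewrite /= tscale_time0 sum2.
Qed.

Theorem lemma3p2 (R : realType) (d : measure_display) (O : measurableType d)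
  (P : probability O R) (xi : time R -> O -> R)
  (c : time R -> R) (Sig : time R -> time R -> R)
  (Q : {measure set (pathSpace R) -> \bar R}) :
  is_process xi -> stoch_continuous P xi -> time_stable P xi ->
  sigma_finite setT Q -> levy_rep P xi c Sig Q -> levy_minimal Q ->
  Q [set f : pathSpace R | sval f (time0 R) <> 0] = 0%E.
Proof.
move=> mxi _ xi_stable _ xi_levy _.
have [_ [Sig_psd [Q_fin _]]] := xi_levy.
set t0 := time0 R.
apply: (measure_neq0_eq0 _ _ (measurable_path_eval t0) (Q_fin t0)) => m.
set th := m.+1%:R^-1.
have [eC eS] := time_stable_char_time0 th mxi xi_stable.
have [b [hC hS]] := levy_rep_char t0 th mxi xi_levy.
have := exponent_eq0_of_idempotent eC eS hC hS.
have := Sig_psd 1%N (fun=> t0) (fun=> th); rewrite !big_ord1.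
have : 0 <= \int[Q]_f (1 - cos (th * sval f t0)).
  by apply: Rintegral_ge0 => f _; rewrite subr_ge0 cos_le1.
lra.
Qed.
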